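(* Let $\lambda>0$, $\gamma\ge0$, $\omega\in[-\pi,\pi]$, and let $\theta\sim\mathrm{GCPC}(\omega,\gamma,\lambda)$, with $\theta$ represented in $(\omega-\pi,\omega+\pi]$. Put $\delta=(\sqrt{\gamma^2+1}-1)/\gamma$ (with $\delta=0$ if $\gamma=0$). For $t\in(\omega-\pi,\omega+\pi)$ define $$\psi(t)=\operatorname{atan2}\bigl(\sin(t-\omega),\ \sqrt{\lambda}\cos(t-\omega)\bigr)\in(-\pi,\pi).$$ Then for all $\omega-\pi<a\le b<\omega+\pi$, $$P(a\le\theta\le b)=\frac{1}{\pi}\left[\arctan\!\left(\frac{1+\delta}{1-\delta}\tan\frac{\psi(b)}{2}\right)-\arctan\!\left(\frac{1+\delta}{1-\delta}\tan\frac{\psi(a)}{2}\right)\right].$$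
   Context: For $\lambda>0$, $\gamma\ge0$ and $\omega\in[-\pi,\pi]$, the distribution $\mathrm{GCPC}(\omega,\gamma,\lambda)$ is the distribution on the circle with density $$f(\theta)=\frac{1}{2\pi\sqrt{\lambda}\,\bigl(b\sqrt{\gamma^2+1}-\gamma\cos\phi\,\sqrt{b}\bigr)},\qquad \phi=\theta-\omega,\quad b=\cos^2\phi+\frac{\sin^2\phi}{\lambda}.$$ The function $\operatorname{atan2}(y,x)\in(-\pi,\pi]$ is the standard two-argument arctangent, i.e. the polar angle of the point $(x,y)\ne(0,0)$. *)

From Stdlib Require Import Reals.
From Coquelicot Require Import Coquelicot.
Open Scope R_scope.

(* Standard two-argument arctangent, values in (-PI, PI]; atan2 0 0 := 0. *)
Definition atan2 (y x : R) : R :=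
  if Rlt_dec 0 x then atan (y / x)
  else if Rlt_dec x 0 then
    (if Rle_dec 0 y then atan (y / x) + PI else atan (y / x) - PI)
  else if Rlt_dec 0 y then PI / 2
  else if Rlt_dec y 0 then - (PI / 2)
  else 0.

Definition gcpc_density (omega gamma lambda theta : R) : R :=
  let phi := theta - omega in
  let b := (cos phi) ^ 2 + (sin phi) ^ 2 / lambda in
  / (2 * PI * sqrt lambda *
     (b * sqrt (gamma ^ 2 + 1) - gamma * cos phi * sqrt b)).

Definition gcpc_delta (gamma : R) : R :=
  if Req_EM_T gamma 0 then 0 else (sqrt (gamma ^ 2 + 1) - 1) / gamma.

Definition gcpc_psi (omega lambda t : R) : R :=
  atan2 (sin (t - omega)) (sqrt lambda * cos (t - omega)).

From Stdlib Require Import Reals Lra.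
From Coquelicot Require Import Coquelicot.
Open Scope R_scope.

(* With [phi = t - omega], the angle [psi] is the polar angle of the point
   [(x, y) = (sqrt lambda * cos phi, sin phi)], so [tan (psi / 2) = y / (r + x)] with
   [r = sqrt (x^2 + y^2)], and along this curve its derivative is
   [(x y' - y x') / (r (r + x)) = sqrt lambda / (r (r + x))].  Since
   [(1 + delta) / (1 - delta) = k := sqrt (gamma^2 + 1) + gamma], the identity
   [(r + x)^2 + k^2 y^2 = 2 k (r + x) (r sqrt (gamma^2 + 1) - gamma x)] turns the
   derivative of [atan (k tan (psi / 2)) / PI] into the density.  The claim is then the
   fundamental theorem of calculus on [[a, b]], where [r + x > 0]. *)

Definition half_angle_tan (x y : R) : R := y / (sqrt (x * x + y * y) + x).

Lemma sqrt_1_plus_sqr_div (x y : R) : x <> 0 ->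
  sqrt (1 + (y / x)²) = sqrt (x * x + y * y) / Rabs x.
Proof.
  intros Hx.
  assert (Hax : 0 < Rabs x) by (apply Rabs_pos_lt; exact Hx).
  assert (Hsq : Rabs x * Rabs x = x * x)
    by (rewrite <- Rabs_mult; apply Rabs_pos_eq; nra).
  replace (1 + (y / x)²) with ((x * x + y * y) / (Rabs x * Rabs x))
    by (rewrite Hsq; unfold Rsqr; field; exact Hx).
  rewrite sqrt_div_alt by nra.
  now rewrite sqrt_square by lra.
Qed.

Lemma polar_atan_div (x y : R) : x <> 0 ->
  sin (atan (y / x)) = y / x * (Rabs x / sqrt (x * x + y * y)) /\
  cos (atan (y / x)) = Rabs x / sqrt (x * x + y * y).
Proof.
  intros Hx.
  assert (0 < Rabs x) by (apply Rabs_pos_lt; exact Hx).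
  assert (0 < sqrt (x * x + y * y)) by (apply sqrt_lt_R0; nra).
  rewrite sin_atan, cos_atan, sqrt_1_plus_sqr_div by exact Hx.
  split; field; lra.
Qed.

Lemma atan2_polar (x y : R) : 0 < sqrt (x * x + y * y) ->
  sin (atan2 y x) = y / sqrt (x * x + y * y) /\
  cos (atan2 y x) = x / sqrt (x * x + y * y).
Proof.
  intros Hr. set (r := sqrt (x * x + y * y)) in *.
  unfold atan2.
  destruct (Rlt_dec 0 x) as [Hx | Hx].
  { destruct (polar_atan_div x y) as [Hs Hc]; [lra |]. fold r in Hs, Hc.
    rewrite Hs, Hc, Rabs_pos_eq by lra. split; field; lra. }
  destruct (Rlt_dec x 0) as [Hx' | Hx'].
  { destruct (polar_atan_div x y) as [Hs Hc]; [lra |]. fold r in Hs, Hc.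
    rewrite Rabs_left in Hs, Hc by lra.
    destruct (Rle_dec 0 y).
    - rewrite neg_sin, neg_cos, Hs, Hc. split; field; lra.
    - rewrite sin_minus, cos_minus, sin_PI, cos_PI, Hs, Hc. split; field; lra. }
  assert (x = 0) by lra. subst x.
  assert (Hry : r = Rabs y)
    by (unfold r; rewrite <- sqrt_Rsqr_abs; f_equal; unfold Rsqr; ring).
  destruct (Rlt_dec 0 y).
  { rewrite Hry, Rabs_pos_eq, sin_PI2, cos_PI2 by lra. split; field; lra. }
  destruct (Rlt_dec y 0).
  { rewrite Hry, Rabs_left, sin_neg, cos_neg, sin_PI2, cos_PI2 by lra.
    split; field; lra. }
  assert (y = 0) by lra. subst y.
  rewrite Rabs_R0 in Hry. lra.
Qed.

Lemma tan_half_angle (x : R) : 0 < 1 + cos x -> tan (x / 2) = sin x / (1 + cos x).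
Proof.
  intros Hx.
  assert (Hs : sin x = 2 * sin (x / 2) * cos (x / 2))
    by (rewrite <- sin_2a; f_equal; field).
  assert (Hc : cos x = 2 * cos (x / 2) * cos (x / 2) - 1)
    by (rewrite <- cos_2a_cos; f_equal; field).
  rewrite Hc in Hx. rewrite Hs, Hc.
  assert (cos (x / 2) <> 0) by (intro E; rewrite E in Hx; lra).
  unfold tan. field. split; [nra | assumption].
Qed.

Lemma tan_half_atan2 (x y : R) : 0 < sqrt (x * x + y * y) + x ->
  tan (atan2 y x / 2) = half_angle_tan x y.
Proof.
  intros Hrx. unfold half_angle_tan. set (r := sqrt (x * x + y * y)) in *.
  assert (Hr : 0 < r).
  { destruct (Rle_lt_or_eq_dec 0 r (sqrt_pos _)) as [| E]; [assumption |].
    apply eq_sym, sqrt_eq_0 in E; [nra | nra]. }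
  destruct (atan2_polar x y Hr) as [Hs Hc]. fold r in Hs, Hc.
  rewrite tan_half_angle, Hs, Hc.
  - field. lra.
  - rewrite Hc. replace (1 + x / r) with ((r + x) / r) by (field; lra).
    apply Rdiv_lt_0_compat; assumption.
Qed.

Lemma sqrt_norm_add_pos (x y : R) : y <> 0 \/ 0 < x -> 0 < sqrt (x * x + y * y) + x.
Proof.
  intros [Hy | Hx].
  - assert (Habs : Rabs x < sqrt (x * x + y * y)).
    { rewrite <- sqrt_Rsqr_abs. apply sqrt_lt_1_alt. unfold Rsqr.
      split; [nra | assert (0 < y * y) by nra; lra]. }
    pose proof (Rle_abs (- x)). rewrite Rabs_Ropp in *. lra.
  - pose proof (sqrt_pos (x * x + y * y)). lra.
Qed.

Lemma is_derive_half_angle_tan (x y : R -> R) (t dx dy : R) :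
  is_derive x t dx -> is_derive y t dy ->
  0 < sqrt (x t * x t + y t * y t) + x t ->
  is_derive (fun s => half_angle_tan (x s) (y s)) t
    ((x t * dy - y t * dx) /
     (sqrt (x t * x t + y t * y t) * (sqrt (x t * x t + y t * y t) + x t))).
Proof.
  intros Hx Hy Hrx. unfold half_angle_tan.
  assert (Hn : 0 < x t * x t + y t * y t).
  { destruct (Rle_lt_or_eq_dec 0 (x t * x t + y t * y t)) as [| E]; [nra | assumption |].
    rewrite <- E, sqrt_0 in Hrx. nra. }
  assert (Hrr := sqrt_sqrt _ (Rlt_le _ _ Hn)).
  assert (Hr := sqrt_lt_R0 _ Hn).
  assert (Hsq : is_derive (fun s => x s * x s + y s * y s) t (2 * (x t * dx + y t * dy))).
  { pose proof (is_derive_plus _ _ _ _ _ (is_derive_mult _ _ _ _ _ Hx Hx Rmult_comm)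
                                         (is_derive_mult _ _ _ _ _ Hy Hy Rmult_comm)) as H.
    unfold plus, mult in H; simpl in H.
    replace (2 * (x t * dx + y t * dy))
      with (dx * x t + x t * dx + (dy * y t + y t * dy)) by ring.
    exact H. }
  apply (is_derive_ext (fun s => y s / (sqrt (x s * x s + y s * y s) + x s))); [reflexivity |].
  evar_last.
  { apply is_derive_div; [exact Hy | | lra].
    apply (@is_derive_plus R_AbsRing); [apply is_derive_sqrt; [exact Hsq | exact Hn] | exact Hx]. }
  simpl. unfold plus; simpl.
  set (r := sqrt (x t * x t + y t * y t)) in *.
  transitivity ((x t * dy - y t * dx) / (r * (r + x t))
                + dy * (r * r - (x t * x t + y t * y t)) / (r * (r + x t) ^ 2)).
  { field. lra. }
  replace (r * r - (x t * x t + y t * y t)) with 0 by lra.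
  field. lra.
Qed.

Lemma one_add_cos_pos (p : R) : -PI < p < PI -> 0 < 1 + cos p.
Proof.
  intros Hp.
  assert (Hc : 0 < cos (p / 2)) by (apply cos_gt_0; lra).
  replace p with (2 * (p / 2)) by field.
  rewrite cos_2a_cos. nra.
Qed.

Lemma gcpc_delta_ratio (gamma : R) : 0 <= gamma ->
  (1 + gcpc_delta gamma) / (1 - gcpc_delta gamma) = sqrt (gamma ^ 2 + 1) + gamma.
Proof.
  intros Hg. unfold gcpc_delta.
  assert (Hq : sqrt (gamma ^ 2 + 1) * sqrt (gamma ^ 2 + 1) = gamma ^ 2 + 1)
    by (apply sqrt_sqrt; nra).
  assert (0 < sqrt (gamma ^ 2 + 1)) by (apply sqrt_lt_R0; nra).
  destruct (Req_EM_T gamma 0) as [-> | Hg0].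
  - replace (0 ^ 2 + 1) with 1 by ring. rewrite sqrt_1. field.
  - set (q := sqrt (gamma ^ 2 + 1)) in *.
    assert (q < gamma + 1) by nra.
    replace ((1 + (q - 1) / gamma) / (1 - (q - 1) / gamma))
      with ((gamma + q - 1) / (gamma - q + 1)) by (field; lra).
    apply (Rmult_eq_reg_r (gamma - q + 1)); [| lra].
    field_simplify; [nra | lra].
Qed.

Lemma gcpc_key_identity (g q x y r : R) :
  q * q = g * g + 1 -> r * r = x * x + y * y ->
  (r + x) ^ 2 + (q + g) ^ 2 * y ^ 2 = 2 * (q + g) * (r + x) * (r * q - g * x).
Proof.
  intros Hq Hr.
  assert (E : 2 * (q + g) * (r + x) * (r * q - g * x) - ((r + x) ^ 2 + (q + g) ^ 2 * y ^ 2)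
            = (q * q - g * g - 1) * (r + x) ^ 2 + (q + g) ^ 2 * (r * r - (x * x + y * y)))
    by ring.
  rewrite Hq, Hr in E. lra.
Qed.

Section GCPC.

Variables omega gamma lambda : R.
Hypothesis lambda_pos : 0 < lambda.
Hypothesis gamma_nonneg : 0 <= gamma.

Local Notation ell_x t := (sqrt lambda * cos (t - omega)).
Local Notation ell_y t := (sin (t - omega)).
Local Notation ell_r t := (sqrt (ell_x t * ell_x t + ell_y t * ell_y t)).

Lemma ell_norm_pos (t : R) : 0 < ell_x t * ell_x t + ell_y t * ell_y t.
Proof.
  pose proof (sin2_cos2 (t - omega)) as Hsc. unfold Rsqr in Hsc.
  assert (HL : sqrt lambda * sqrt lambda = lambda) by (apply sqrt_sqrt; lra).
  replace (ell_x t * ell_x t) with (lambda * (cos (t - omega) * cos (t - omega)))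
    by (rewrite <- HL at 1; ring).
  destruct (Req_dec (cos (t - omega)) 0) as [E | E]; [rewrite E in *; nra |].
  assert (0 < cos (t - omega) * cos (t - omega)) by nra. nra.
Qed.

Lemma ell_r_pos (t : R) : 0 < ell_r t.
Proof. exact (sqrt_lt_R0 _ (ell_norm_pos t)). Qed.

Lemma ell_r_add_x_pos (t : R) : -PI < t - omega < PI -> 0 < ell_r t + ell_x t.
Proof.
  intros Hp. apply sqrt_norm_add_pos.
  destruct (Req_dec (sin (t - omega)) 0) as [Hs | Hs]; [right | left; exact Hs].
  pose proof (sin2_cos2 (t - omega)) as Hsc. unfold Rsqr in Hsc.
  pose proof (one_add_cos_pos _ Hp).
  assert (cos (t - omega) = 1) by (rewrite Hs in Hsc; nra).
  assert (0 < sqrt lambda) by (apply sqrt_lt_R0; lra). nra.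
Qed.

Lemma tan_half_gcpc_psi (t : R) : -PI < t - omega < PI ->
  tan (gcpc_psi omega lambda t / 2) = half_angle_tan (ell_x t) (ell_y t).
Proof. intros Hp. exact (tan_half_atan2 _ _ (ell_r_add_x_pos t Hp)). Qed.

Lemma is_derive_ell_half_tan (t : R) : -PI < t - omega < PI ->
  is_derive (fun s => half_angle_tan (ell_x s) (ell_y s)) t
    (sqrt lambda / (ell_r t * (ell_r t + ell_x t))).
Proof.
  intros Hp.
  assert (Hx : is_derive (fun s => ell_x s) t (- sqrt lambda * sin (t - omega)))
    by (auto_derive; [easy | unfold Rminus; ring]).
  assert (Hy : is_derive (fun s => ell_y s) t (cos (t - omega)))
    by (auto_derive; [easy | unfold Rminus; ring]).
  pose proof (is_derive_half_angle_tan _ _ t _ _ Hx Hy (ell_r_add_x_pos t Hp)) as H.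
  replace (sqrt lambda) with
    (ell_x t * cos (t - omega) - ell_y t * (- sqrt lambda * sin (t - omega))) at 1.
  { exact H. }
  pose proof (sin2_cos2 (t - omega)) as Hsc. unfold Rsqr in Hsc.
  transitivity (sqrt lambda * (sin (t - omega) * sin (t - omega) + cos (t - omega) * cos (t - omega)));
    [ring | rewrite Hsc; ring].
Qed.

Lemma gcpc_denominator_pos (t : R) :
  0 < ell_r t * sqrt (gamma ^ 2 + 1) - gamma * ell_x t.
Proof.
  pose proof (ell_r_pos t) as Hr.
  pose proof (sqrt_sqrt _ (Rlt_le _ _ (ell_norm_pos t))) as Hrr.
  assert (Hq : sqrt (gamma ^ 2 + 1) * sqrt (gamma ^ 2 + 1) = gamma ^ 2 + 1)
    by (apply sqrt_sqrt; nra).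
  assert (0 < sqrt (gamma ^ 2 + 1)) by (apply sqrt_lt_R0; nra).
  assert (gamma < sqrt (gamma ^ 2 + 1)) by nra.
  assert (ell_x t <= ell_r t) by nra.
  nra.
Qed.

Lemma gcpc_density_polar (t : R) :
  gcpc_density omega gamma lambda t =
  sqrt lambda / (2 * PI * ell_r t * (ell_r t * sqrt (gamma ^ 2 + 1) - gamma * ell_x t)).
Proof.
  pose proof (ell_r_pos t) as Hr.
  pose proof (gcpc_denominator_pos t) as Hd.
  pose proof PI_RGT_0.
  assert (HL : 0 < sqrt lambda) by (apply sqrt_lt_R0; lra).
  assert (HLL : sqrt lambda * sqrt lambda = lambda) by (apply sqrt_sqrt; lra).
  assert (Hb : cos (t - omega) ^ 2 + sin (t - omega) ^ 2 / lambda
               = ell_r t / sqrt lambda * (ell_r t / sqrt lambda)).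
  { transitivity (ell_r t * ell_r t / (sqrt lambda * sqrt lambda)); [| field; lra].
    rewrite (sqrt_sqrt _ (Rlt_le _ _ (ell_norm_pos t))).
    set (L := sqrt lambda) in *. rewrite <- HLL. field. lra. }
  unfold gcpc_density. cbv zeta.
  rewrite Hb, sqrt_square by (left; apply Rdiv_lt_0_compat; assumption).
  field. repeat split; try lra. apply Rgt_not_eq. nra.
Qed.

Lemma gcpc_density_continuous (t : R) : continuous (gcpc_density omega gamma lambda) t.
Proof.
  apply (continuous_ext (fun s => sqrt lambda /
      (2 * PI * ell_r s * (ell_r s * sqrt (gamma ^ 2 + 1) - gamma * ell_x s)))).
  { intro s. symmetry. apply gcpc_density_polar. }
  apply (@ex_derive_continuous R_AbsRing R_NormedModule).
  pose proof (ell_norm_pos t). pose proof (ell_r_pos t). pose proof (gcpc_denominator_pos t).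
  pose proof PI_RGT_0.
  auto_derive. unfold Rminus in *.
  replace (gamma * (gamma * 1)) with (gamma ^ 2) by ring.
  repeat split; try lra.
  apply Rgt_not_eq, Rmult_lt_0_compat; [apply Rmult_lt_0_compat |]; lra.
Qed.

Lemma is_derive_gcpc_cdf (t : R) : -PI < t - omega < PI ->
  is_derive
    (fun s => / PI * atan ((sqrt (gamma ^ 2 + 1) + gamma) * half_angle_tan (ell_x s) (ell_y s)))
    t (gcpc_density omega gamma lambda t).
Proof.
  intros Hp.
  set (q := sqrt (gamma ^ 2 + 1)).
  pose proof (is_derive_comp atan _ t _ _ (is_derive_atan _)
                (is_derive_scal _ t (q + gamma) _ (is_derive_ell_half_tan t Hp))) as H.
  apply (is_derive_scal _ t (/ PI)) in H.
  rewrite gcpc_density_polar.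
  match type of H with is_derive _ _ ?d => replace (sqrt lambda / _) with d end;
    [exact H |].
  change (scal ?a ?b) with (a * b). unfold half_angle_tan.
  pose proof (ell_r_pos t) as Hr. pose proof (ell_r_add_x_pos t Hp) as Hrx.
  pose proof (gcpc_denominator_pos t) as Hd. fold q in Hd.
  pose proof (sqrt_sqrt _ (Rlt_le _ _ (ell_norm_pos t))) as Hrr.
  assert (Hq : q * q = gamma * gamma + 1) by (unfold q; rewrite sqrt_sqrt; nra).
  assert (0 < q) by (apply sqrt_lt_R0; nra).
  pose proof PI_RGT_0.
  set (r := ell_r t) in *. set (x := ell_x t) in *. set (y := ell_y t) in *.
  assert (Hden : 1 + ((q + gamma) * (y / (r + x)))² =
                 2 * (q + gamma) * (r + x) * (r * q - gamma * x) / (r + x) ^ 2).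
  { rewrite <- (gcpc_key_identity gamma q x y r Hq Hrr).
    unfold Rsqr. field. lra. }
  rewrite Hden. fold q. field. repeat split; lra.
Qed.

End GCPC.

Theorem mainTheorem5 (omega gamma lambda a b : R) :
  0 < lambda -> 0 <= gamma -> -PI <= omega <= PI ->
  omega - PI < a -> a <= b -> b < omega + PI ->
  is_RInt (gcpc_density omega gamma lambda) a b
    (/ PI *
     (atan ((1 + gcpc_delta gamma) / (1 - gcpc_delta gamma)
            * tan (gcpc_psi omega lambda b / 2))
      - atan ((1 + gcpc_delta gamma) / (1 - gcpc_delta gamma)
            * tan (gcpc_psi omega lambda a / 2)))).
Proof.
  intros Hl Hg _ Ha Hab Hb.
  rewrite gcpc_delta_ratio by exact Hg.
  rewrite !tan_half_gcpc_psi by (first [exact Hl | lra]).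
  set (F t := / PI * atan ((sqrt (gamma ^ 2 + 1) + gamma) *
                half_angle_tan (sqrt lambda * cos (t - omega)) (sin (t - omega)))).
  match goal with |- is_RInt _ _ _ ?v => replace v with (minus (F b) (F a)) end.
  2: { unfold F, minus, plus, opp; simpl. ring. }
  apply (@is_RInt_derive R_CompleteNormedModule).
  - intros t Ht. rewrite Rmin_left, Rmax_right in Ht by lra.
    apply is_derive_gcpc_cdf; [exact Hl | exact Hg | lra].
  - intros t _. exact (gcpc_density_continuous _ _ _ Hl Hg t).
Qed.
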